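(* Let $\gamma>0$, $k>1$ an integer, $1\le c_0\le 2$, and $$\eta_{k,\gamma,c_0}=\min\left\{u\in(0,1):\ c_0\left(1-\left(\frac{u}{2k}\right)^{1/k}\right)^\gamma+\left(1-\frac{u}{2k}\right)^\gamma\le 1\right\}.$$ Then $$\eta_{k,\gamma,c_0}\le\min\left\{u\in(0,1):\ \log c_0+\gamma\log\log\frac{2k}{u}-\gamma\log k+\log\left(1+\frac{2k}{u\gamma}\right)\le 0\right\}.$$
   Context: In the paper $\gamma=(1-\alpha)/\alpha$ for a stability index $0<\alpha<1$. *)

From HB Require Import structures.
From mathcomp Require Import all_boot all_order all_algebra.
From mathcomp Require Import all_classical all_reals all_analysis.
Set Implicit Arguments. Unset Strict Implicit. Unset Printing Implicit Defensive.
Import Order.TTheory GRing.Theory Num.Theory.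
Local Open Scope ring_scope.

Definition is_min {R : realType} (S : R -> Prop) (m : R) : Prop :=
  S m /\ (forall u, S u -> m <= u).

Definition eta_set {R : realType} (k : nat) (gamma c0 : R) (u : R) : Prop :=
  0 < u < 1 /\
  c0 * (1 - (u / (2 * k%:R)) `^ (k%:R)^-1) `^ gamma
    + (1 - u / (2 * k%:R)) `^ gamma <= 1.

Definition bound_set {R : realType} (k : nat) (gamma c0 : R) (u : R) : Prop :=
  0 < u < 1 /\
  ln c0 + gamma * ln (ln (2 * k%:R / u)) - gamma * ln k%:R
    + ln (1 + 2 * k%:R / (u * gamma)) <= 0.

(** With [x = u / 2k] and [L = ln (2k / u) = - ln x], the tangent-line bounds
    for [expR] give [1 - x^(1/k) <= L / k] and [(1 - x)^gamma <= 1 / (1 + gamma x)].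
    The defining inequality of the right-hand set says exactly that
    [c0 (L / k)^gamma <= gamma x / (1 + gamma x) = 1 - 1 / (1 + gamma x)],
    so every point of that set already lies in the set defining [eta]. *)

From HB Require Import structures.
From mathcomp Require Import all_boot all_order all_algebra.
From mathcomp Require Import all_classical all_reals all_analysis.
From mathcomp Require Import ring lra.
Import Order.TTheory GRing.Theory Num.Theory.
Local Open Scope ring_scope.

Lemma is_min_le_subset (R : realType) (S T : R -> Prop) (a b : R) :
  (forall u, T u -> S u) -> is_min S a -> is_min T b -> a <= b.
Proof. by move=> TS [_ minS] [Tb _]; exact/minS/TS. Qed.

Lemma powR_ge1Dln {R : realType} (b x : R) : 0 < x -> 1 + b * ln x <= x `^ b.
Proof. by move=> x0; rewrite /powR gt_eqF // expR_ge1Dx. Qed.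

Lemma powR_onemx_le_inv {R : realType} (x gamma : R) :
  0 <= gamma -> 0 <= x < 1 -> (1 - x) `^ gamma <= (1 + gamma * x)^-1.
Proof.
move=> g0 /andP[x0 x1].
have ln_onemx : ln (1 - x) <= - x by apply: le_ln1Dx; lra.
rewrite /powR gt_eqF; last lra.
apply: (@le_trans _ _ (expR (- (gamma * x)))).
  by rewrite ler_expR -mulrN ler_wpM2l.
rewrite expRN lef_pV2 ?posrE ?expR_gt0 ?expR_ge1Dx //.
by rewrite ltr_wpDr ?mulr_ge0.
Qed.

Lemma bound_set_sub_eta_set (R : realType) (k : nat) (gamma c0 u : R) :
  (0 < k)%N -> 0 < gamma -> 0 < c0 ->
  bound_set k gamma c0 u -> eta_set k gamma c0 u.
Proof.
move=> k0 g0 c00 [/andP[u0 u1] hb]; split; first exact/andP.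
set K : R := k%:R.
have K1 : 1 <= K by rewrite /K ler1n.
set x := u / (2 * K).
have x0 : 0 < x by rewrite divr_gt0 ?mulr_gt0 //; lra.
have x1 : x < 1 by rewrite ltr_pdivrMr ?mulr_gt0 //; lra.
set L := ln (2 * K / u).
have L0 : 0 < L by apply: ln_gt0; rewrite ltr_pdivlMr //; lra.
have lnx : ln x = - L by rewrite /L -lnV ?posrE ?divr_gt0 ?mulr_gt0 ?invf_div //; lra.
set A := (L / K) `^ gamma.
have first_term : (1 - x `^ K^-1) `^ gamma <= A.
  have root_le1 : x `^ K^-1 <= 1.
    by rewrite /powR gt_eqF // expR_le1 lnx mulrN oppr_le0 mulr_ge0 ?invr_ge0; lra.
  apply: ge0_ler_powR; rewrite ?nnegrE ?subr_ge0 ?divr_ge0 //; try lra.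
  by have := powR_ge1Dln K^-1 x x0; rewrite lnx mulrN mulrC; lra.
set B := 1 + 2 * K / (u * gamma).
have B0 : 0 < B by rewrite addr_gt0 // divr_gt0 ?mulr_gt0 //; lra.
have A0 : 0 < A by rewrite powR_gt0 // divr_gt0 //; lra.
have cAB_le1 : c0 * A * B <= 1.
  have lnP : ln (c0 * A * B) = ln c0 + gamma * ln L - gamma * ln K + ln B.
    rewrite lnM ?posrE ?mulr_gt0 // lnM ?posrE // ln_powR ln_div ?posrE //; last lra.
    ring.
  by rewrite -ler_ln ?posrE ?mulr_gt0 // ln1 lnP.
(* [B] is [1 + 1 / (gamma x)], so [1 / B] and [1 / (1 + gamma x)] are complementary. *)
have B_split : B^-1 + (1 + gamma * x)^-1 = 1.
  rewrite /B /x; field.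
  by rewrite -/K !lt0r_neq0 ?addr_gt0 ?mulr_gt0 //; lra.
have second_term : (1 - x) `^ gamma <= (1 + gamma * x)^-1.
  by apply: powR_onemx_le_inv; rewrite ?(ltW g0) ?(ltW x0).
have cA_le : c0 * A <= B^-1 by rewrite -div1r ler_pdivlMr.
by rewrite -[leRHS]B_split lerD // (le_trans _ cA_le) // (ler_pM2l c00) first_term.
Qed.

Theorem lemma5 (R : realType) (gamma : R) (k : nat) (c0 : R)
  (hgamma : 0 < gamma) (hk : (1 < k)%N) (hc0 : 1 <= c0 <= 2)
  (eta m : R) :
  is_min (eta_set k gamma c0) eta ->
  is_min (bound_set k gamma c0) m ->
  eta <= m.
Proof.
apply: is_min_le_subset => u; apply: bound_set_sub_eta_set => //.
- exact: ltn_trans hk.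
- by case/andP: hc0 => ? _; lra.
Qed.
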